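(* Let $A$ be a finite-dimensional complex associative algebra, regarded as a real associative algebra. On $\mathfrak{aff}(A)$ define $J(a,b)=(b,-a)$ and $K(a,b)=(-ia,ib)$ for $a,b\in A$. Then $J$ and $K$ are complex structures on $\mathfrak{aff}(A)$ and $JK=-KJ$; hence $\mathfrak{aff}(A)$ carries a hypercomplex structure.
   Context: For a real associative algebra $A$, $\mathfrak{aff}(A)$ is the Lie algebra $A\oplus A$ with bracket $[(a,b),(a',b')]=(aa'-a'a,\ ab'-a'b)$. A complex structure on a real Lie algebra $\mathfrak g$ is a linear map $J$ with $J^2=-\mathrm{Id}$ and $J[x,y]-[Jx,y]-[x,Jy]-J[Jx,Jy]=0$ for all $x,y$. A hypercomplex structure is a pair of anticommuting complex structures. *)

(* complex numbers C = R[i] over a real closed field R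
   (mathcomp-real-closed), A a finite-dimensional C-vector space (vectType)
   with an associative C-bilinear product (not assumed unital). *)
From HB Require Import structures.
From mathcomp Require Import all_boot all_order all_algebra.
From mathcomp Require Import complex.
Set Implicit Arguments. Unset Strict Implicit. Unset Printing Implicit Defensive.
Import Order.TTheory GRing.Theory Num.Theory.
Local Open Scope ring_scope.

Section Aff.
Variable R : rcfType.
Variable A : lmodType (complex R).

Definition cI : complex R := Complex 0 1.
Definition creal (r : R) : complex R := Complex r 0.

Definition is_assoc_algebra (mul : A -> A -> A) : Prop :=
  [/\ (forall (c : complex R) x y z, mul (c *: x + y) z = c *: mul x z + mul y z),
      (forall (c : complex R) x y z, mul x (c *: y + z) = c *: mul x y + mul x z)
    & (forall x y z, mul x (mul y z) = mul (mul x y) z)].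

Definition aff_bracket (mul : A -> A -> A) (u v : A * A) : A * A :=
  (mul u.1 v.1 - mul v.1 u.1, mul u.1 v.2 - mul v.1 u.2).

Definition real_linear (J : A * A -> A * A) : Prop :=
  forall (r : R) (x y : A * A), J (creal r *: x + y) = creal r *: J x + J y.

Definition complex_structure (br : A * A -> A * A -> A * A)
  (J : A * A -> A * A) : Prop :=
  [/\ real_linear J,
      (forall x, J (J x) = - x)
    & (forall x y, J (br x y) - br (J x) y - br x (J y) - J (br (J x) (J y)) = 0)].

Definition hypercomplex_structure (br : A * A -> A * A -> A * A)
  (J K : A * A -> A * A) : Prop :=
  [/\ complex_structure br J, complex_structure br K
    & (forall x, J (K x) = - K (J x))].

Definition affJ (u : A * A) : A * A := (u.2, - u.1).
Definition affK (u : A * A) : A * A := (- (cI *: u.1), cI *: u.2).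
End Aff.

(* Both integrability conditions are identities in the components of the
   bracket: for [J] they only use that the product is additive in its second
   argument, and for [K] that it is [C]-bilinear, so that [i] can be pulled
   out of every product and [i * i = -1]. *)
From HB Require Import structures.
From mathcomp Require Import all_boot all_order all_algebra.
From mathcomp Require Import complex ssrAC.
Import GRing.Theory.
Local Open Scope ring_scope.

Lemma cI_sqr (R : rcfType) : cI R * cI R = -1.
Proof. by rewrite /cI -expr2 sqr_i. Qed.

Section Bilinear.
Variable R : rcfType.
Variable A : lmodType (complex R).
Variable mul : A -> A -> A.
Hypothesis mul_linearl :
  forall (c : complex R) x y z, mul (c *: x + y) z = c *: mul x z + mul y z.
Hypothesis mul_linearr :
  forall (c : complex R) x y z, mul x (c *: y + z) = c *: mul x y + mul x z.

Lemma amulDl x y z : mul (x + y) z = mul x z + mul y z.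
Proof. by have := mul_linearl 1 x y z; rewrite !scale1r. Qed.

Lemma amulDr x y z : mul x (y + z) = mul x y + mul x z.
Proof. by have := mul_linearr 1 x y z; rewrite !scale1r. Qed.

Lemma amul0l z : mul 0 z = 0.
Proof. by apply: (addrI (mul 0 z)); rewrite -amulDl !addr0. Qed.

Lemma amul0r z : mul z 0 = 0.
Proof. by apply: (addrI (mul z 0)); rewrite -amulDr !addr0. Qed.

Lemma amulZl c x z : mul (c *: x) z = c *: mul x z.
Proof. by have := mul_linearl c x 0 z; rewrite !addr0 amul0l addr0. Qed.

Lemma amulZr c x z : mul x (c *: z) = c *: mul x z.
Proof. by have := mul_linearr c x z 0; rewrite !addr0 amul0r addr0. Qed.

Lemma amulNl x z : mul (- x) z = - mul x z.
Proof. by rewrite -scaleN1r amulZl scaleN1r. Qed.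

Lemma amulNr x z : mul x (- z) = - mul x z.
Proof. by rewrite -scaleN1r amulZr scaleN1r. Qed.

Lemma affJ_complex_structure : complex_structure (aff_bracket mul) (@affJ R A).
Proof.
split.
- by move=> r [a b] [c d]; rewrite /affJ /=; congr pair; rewrite /= opprD scalerN.
- by move=> [a b]; rewrite /affJ /=; congr pair.
move=> [a b] [c d]; rewrite /affJ /aff_bracket /=; congr pair => /=;
  rewrite !amulNr !opprB ?opprD ?opprK !addrA.
- by rewrite (ACl ((1*6)*(2*3)*(4*8)*(5*7))%AC) /= ?subrr ?addNr ?addr0.
- by rewrite (ACl ((1*3)*(2*6)*(4*7)*(5*8))%AC) /= ?subrr ?addNr ?addr0.
Qed.

Lemma affK_complex_structure : complex_structure (aff_bracket mul) (@affK R A).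
Proof.
split.
- move=> r [a b] [c d]; rewrite /affK /=; congr pair => /=;
  by rewrite ?(scalerN, scalerDr, scalerA, opprD) [cI R * _]mulrC.
- by move=> [a b]; rewrite /affK /=; congr pair;
    rewrite /= ?scalerN scalerA cI_sqr scaleN1r ?opprK.
move=> [a b] [c d]; rewrite /affK /aff_bracket /=; congr pair => /=;
  rewrite ?(amulNr, amulNl, amulZr, amulZl, scalerA, cI_sqr, scaleN1r, opprB,
            opprD, opprK, scalerN, scalerBr, scalerDr) ?addrA.
- by rewrite (ACl ((1*3)*(2*4)*(5*8)*(6*7))%AC) /= ?subrr ?addNr ?addr0.
- by rewrite (ACl ((1*6)*(2*3)*(4*8)*(5*7))%AC) /= ?subrr ?addNr ?addr0.
Qed.

End Bilinear.

Lemma affJK_anticomm (R : rcfType) (A : lmodType (complex R)) (x : A * A) :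
  affJ (affK x) = - affK (affJ x).
Proof. by case: x => a b; rewrite /affK /affJ /=; congr pair; rewrite /= ?scalerN ?opprK. Qed.

Theorem mainTheorem4 (R : rcfType) (A : vectType (complex R))
  (mul : A -> A -> A) (hA : is_assoc_algebra mul) :
  [/\ complex_structure (aff_bracket mul) (@affJ R A),
      complex_structure (aff_bracket mul) (@affK R A),
      (forall x : A * A, affJ (affK x) = - affK (affJ x))
    & hypercomplex_structure (aff_bracket mul) (@affJ R A) (@affK R A)].
Proof.
case: hA => mul_linearl mul_linearr _.
have HJ := @affJ_complex_structure R A mul mul_linearr.
have HK := @affK_complex_structure R A mul mul_linearl mul_linearr.
have JK := @affJK_anticomm R A.
by split; last split.
Qed.
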